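(* Consider the parallel multiple access channel power allocation game and the replicator dynamics described in the context. Let $q\in\Delta$ be the (almost surely unique) Nash equilibrium of the game. Then every solution orbit $p(t)$ of the replicator dynamics whose initial point $p(0)$ has finite Kullback–Leibler divergence $H_q(p(0))<\infty$ converges to $q$ as $t\to\infty$. Furthermore, even if the game does not admit a unique Nash equilibrium, every solution trajectory starting in the interior of $\Delta$ converges to a Nash equilibrium (a single point, not merely to the set of Nash equilibria).
   Context: Setting: users $\mathcal{K}=\{1,\dots,K\}$, nodes $\mathcal{A}=\{1,\dots,A\}$. User $k$ has maximum power $P_k>0$ and strategy set $\Delta_k=\{p_k\in\mathbb{R}^{\mathcal{A}}: p_{k\alpha}\ge 0,\ \sum_\alpha p_{k\alpha}=P_k\}$; $\Delta=\prod_k\Delta_k$. Payoffs: $u_k(p)=\sum_{\alpha} b_\alpha\log\bigl(1+\frac{g_{k\alpha}p_{k\alpha}}{\sigma_\alpha^2+\sum_{\ell\neq k}g_{\ell\alpha}p_{\ell\alpha}}\bigr)$ with constants $b_\alpha>0$, $\sigma_\alpha^2>0$ and channel gains $g_{k\alpha}>0$ drawn from a continuous (nonatomic) probability distribution on the positive reals. $q\in\Delta$ is a Nash equilibrium if $u_k(q)\ge u_k(q_{-k};q_k')$ for all $k$ and $q_k'\in\Delta_k$. Define $v_{k\alpha}(p)=\frac{b_\alpha g_{k\alpha}}{\sigma_\alpha^2+\sum_{\ell}g_{\ell\alpha}p_{\ell\alpha}}$ and $v_k(p)=P_k^{-1}\sum_\beta p_{k\beta}v_{k\beta}(p)$. The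 replicator dynamics are the ODE $\frac{dp_{k\alpha}}{dt}=p_{k\alpha}\bigl(v_{k\alpha}(p(t))-v_k(p(t))\bigr)$ on $\Delta$. The Kullback–Leibler divergence of $p$ with respect to $q$ is $H_q(p)=\sum_{k,\alpha}q_{k\alpha}\log(q_{k\alpha}/p_{k\alpha})$ (terms with $q_{k\alpha}=0$ are zero), finite iff $p_{k\alpha}>0$ whenever $q_{k\alpha}>0$. *)

From HB Require Import structures.
From mathcomp Require Import all_boot all_order all_algebra.
From mathcomp Require Import all_classical all_reals all_analysis.
Set Implicit Arguments. Unset Strict Implicit. Unset Printing Implicit Defensive.
Import Order.TTheory GRing.Theory Num.Theory.
Import numFieldNormedType.Exports.
Local Open Scope classical_set_scope.
Local Open Scope ring_scope.

Section PMAC.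
Variables (R : realType) (K A : nat).
(* P k : max power of user k; b a, sigma2 a : constants b_alpha, sigma_alpha^2;
   g k a : channel gain g_{k alpha}. *)
Variables (P : 'I_K -> R) (b sigma2 : 'I_A -> R) (g : 'I_K -> 'I_A -> R).

Definition profile := 'I_K -> 'I_A -> R.

Definition in_Delta_k (k : 'I_K) (pk : 'I_A -> R) : Prop :=
  (forall a, 0 <= pk a) /\ \sum_(a < A) pk a = P k.

Definition in_Delta (p : profile) : Prop := forall k, in_Delta_k k (p k).

Definition in_interior (p : profile) : Prop :=
  in_Delta p /\ forall k a, 0 < p k a.

Definition payoff (k : 'I_K) (p : profile) : R :=
  \sum_(a < A) b a * ln (1 + g k a * p k a /
       (sigma2 a + \sum_(l < K | l != k) g l a * p l a)).

Definition deviate (q : profile) (k : 'I_K) (qk' : 'I_A -> R) : profile :=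
  fun l => if l == k then qk' else q l.

Definition is_NE (q : profile) : Prop :=
  in_Delta q /\
  forall k (qk' : 'I_A -> R), in_Delta_k k qk' -> payoff k (deviate q k qk') <= payoff k q.

Definition vka (p : profile) (k : 'I_K) (a : 'I_A) : R :=
  b a * g k a / (sigma2 a + \sum_(l < K) g l a * p l a).

Definition vk (p : profile) (k : 'I_K) : R :=
  (P k)^-1 * \sum_(a < A) p k a * vka p k a.

Definition replicator_solution (p : R -> profile) : Prop :=
  (forall t : R, 0 <= t -> in_Delta (p t)) /\
  (forall (k : 'I_K) (a : 'I_A), {within `[0, +oo[, continuous (fun t => p t k a)}) /\
  (forall t : R, 0 < t -> forall (k : 'I_K) (a : 'I_A),
      is_derive t (1 : R) (fun s => p s k a) (p t k a * (vka (p t) k a - vk (p t) k))).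

Definition KL (q p : profile) : \bar R :=
  (\sum_(k < K) \sum_(a < A)
     (if (q k a == 0)%R then 0%E
      else if (p k a == 0)%R then +oo%E
      else (q k a * ln (q k a / p k a))%R%:E))%E.

Definition converges_to (p : R -> profile) (q : profile) : Prop :=
  forall (k : 'I_K) (a : 'I_A), (fun t : R => p t k a) @ +oo --> q k a.

End PMAC.

(* The game has the concave potential
   Phi(p) = sum_alpha b_alpha ln(sigma_alpha^2 + sum_l g_{l alpha} p_{l alpha}):
   u_k = Phi - (a term independent of p_k), so maximisers of Phi are Nash equilibria.
   Along a replicator orbit, d/dt H_q(p) = -<v(p), q - p> <= Phi(p) - Phi(q) by concavity.
   For a maximiser q, H_q(p(t)) is nonincreasing and nonnegative, which forces
   Phi(p(t)) arbitrarily close to max Phi at late times; by compactness of Delta the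
   orbit then has a cluster point v maximising Phi. Now H_v(p(t)) is nonincreasing and
   arbitrarily small at late times, so it tends to 0, and the Hellinger bound
   (sqrt p - sqrt v)^2 <= H_v(p) gives p(t) -> v. With a unique equilibrium, q = v. *)

From HB Require Import structures.
From mathcomp Require Import all_boot all_order all_algebra.
From mathcomp Require Import all_classical all_reals all_analysis.
From mathcomp Require Import lra ring.
Set Implicit Arguments. Unset Strict Implicit. Unset Printing Implicit Defensive.
Import Order.TTheory GRing.Theory Num.Theory.
Import numFieldNormedType.Exports.
Local Open Scope ring_scope.

Lemma ler_sum_term (R : numDomainType) (I : finType) (F : I -> R) i :
  (forall j, 0 <= F j) -> F i <= \sum_j F j.
Proof.
by move=> F0; rewrite (bigD1 i) //= lerDl; apply: sumr_ge0 => j _; apply: F0.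
Qed.

Section real_facts.
Variable R : realType.

Lemma ln_le_subr1 {x : R} : 0 < x -> ln x <= x - 1.
Proof.
by move=> x0; have := @le_ln1Dx R (x - 1); rewrite addrCA subrr addr0; apply; lra.
Qed.

Lemma continuous_sum (T : topologicalType) n (h : 'I_n -> T -> R) (x : T) :
  (forall i, {for x, continuous (h i)}) ->
  {for x, continuous (fun s => \sum_(i < n) h i s)}.
Proof.
move=> hc; rewrite -fct_sumE.
elim/big_ind : _ => //; first exact: cst_continuous.
by move=> f1 f2 c1 c2; apply: continuousD.
Qed.

Lemma sqr_subr_le_sqrt (u w M : R) : 0 <= u <= M -> 0 <= w <= M ->
  (u - w) ^+ 2 <= 4 * M * (Num.sqrt u - Num.sqrt w) ^+ 2.
Proof.
move=> /andP[u0 uM] /andP[w0 wM].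
have [su0 sw0] := (sqrtr_ge0 u, sqrtr_ge0 w).
have eu : u = Num.sqrt u ^+ 2 by rewrite sqr_sqrtr.
have ew : w = Num.sqrt w ^+ 2 by rewrite sqr_sqrtr.
have -> : (u - w) ^+ 2 = (Num.sqrt u + Num.sqrt w) ^+ 2 * (Num.sqrt u - Num.sqrt w) ^+ 2.
  by rewrite {1}eu {1}ew; ring.
apply: ler_wpM2r; first exact: sqr_ge0.
have := sqr_ge0 (Num.sqrt u - Num.sqrt w); rewrite !expr2 in eu ew *; nra.
Qed.

Definition kl_term (x y : R) := if x == 0 then 0 else x * (ln x - ln y).

Lemma kl_term_ge_hellinger (x y : R) : 0 <= x -> 0 <= y -> (x != 0 -> 0 < y) ->
  (Num.sqrt y - Num.sqrt x) ^+ 2 <= kl_term x y - x + y.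
Proof.
move=> x0 y0 xy; rewrite /kl_term; case: eqP => [->|/eqP xn0].
  by rewrite sqrtr0 subr0 sqr_sqrtr // subr0 add0r.
have [yp xp] : 0 < y /\ 0 < x by split; [exact: xy | rewrite lt0r xn0].
set sy := Num.sqrt y; set sx := Num.sqrt x.
have [sy0 sx0] : 0 < sy /\ 0 < sx by split; rewrite sqrtr_gt0.
have ey : y = sy ^+ 2 by rewrite sqr_sqrtr.
have ex : x = sx ^+ 2 by rewrite sqr_sqrtr.
have lnE : ln x - ln y = - (2 * (ln sy - ln sx)).
  by rewrite ex ey !lnXn // !mulr2n; ring.
have h := ln_le_subr1 (divr_gt0 sy0 sx0); rewrite ln_div ?posrE // in h.
have : 2 * x * (ln sy - ln sx) <= 2 * sx * sy - 2 * x.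
  have -> : 2 * sx * sy - 2 * x = 2 * x * (sy / sx - 1) by rewrite ex; field; lra.
  by rewrite ler_pM2l //; lra.
rewrite lnE; nra.
Qed.

Lemma proportional_derive_gt0 (f h : R -> R) (B : R) :
  {within `[0, +oo[, continuous f}%classic ->
  (forall t : R, 0 < t -> 0 <= f t) -> (forall t : R, 0 < t -> - B <= h t) ->
  (forall t : R, 0 < t -> is_derive t 1 f (f t * h t)) ->
  0 < f 0 -> forall t : R, 0 <= t -> 0 < f t.
Proof.
move=> fc f_ge0 hB df f0 t t0.
(* f(t) e^(Bt) is nondecreasing *)
pose e (s : R) := expR (B * s).
have de (s : R) : is_derive s 1 e (e s * B).
  apply: (is_derive1_comp (f := expR) (g := fun s => B * s)).
  by apply: is_derive_eq; rewrite /GRing.scale /= mulr1.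
pose F (s : R) := f s * e s.
have dF (s : R) : 0 < s -> is_derive s 1 F (f s * (e s * B) + e s * (f s * h s)).
  by move=> s0; have := is_deriveM (df s s0) (de s).
have Fc : {within `[0, +oo[, continuous F}%classic.
  have ec : continuous e.
    move=> s; apply: continuous_comp; last exact: continuous_expR.
    by apply: continuousM; [exact: cst_continuous | exact: cvg_id].
  by move=> s; apply: continuousM (fc s) _; apply: continuous_subspaceT.
have : F 0 <= F t.
  apply: (@ger0_derive1_ndecry R F 0) => // s; rewrite in_itv /= andbT => s0.
    by have [] := dF s s0.
  rewrite derive1E (@derive_val _ _ _ _ _ _ _ (dF s s0)).
  have -> : f s * (e s * B) + e s * (f s * h s) = e s * (f s * (B + h s)) by ring.
  apply: mulr_ge0; first exact/ltW/expR_gt0.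
  by apply: mulr_ge0; [exact: f_ge0 | have := hB s s0; lra].
by rewrite /F /e mulr0 expR0 mulr1 => /(lt_le_trans f0); rewrite pmulr_lgt0 ?expR_gt0.
Qed.

Lemma derive_le_rate (f f' : R -> R) (c T : R) :
  (forall t : R, T <= t -> is_derive t 1 f (f' t)) ->
  (forall t : R, T < t -> f' t <= - c) ->
  forall x y : R, T <= x -> x <= y -> f y + c * y <= f x + c * x.
Proof.
move=> df f'c x y Tx xy.
pose F (s : R) := f s + c * s.
have dF (s : R) : T <= s -> is_derive s 1 F (f' s + c).
  move=> Ts; apply: is_deriveD; first exact: df.
  by apply: is_derive_eq; rewrite /GRing.scale /= mulr1.
apply: (@ler0_derive1_nincry R F T) => // [s|s|].
- by rewrite in_itv /= andbT => Ts; have [] := dF s (ltW Ts).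
- rewrite in_itv /= andbT => Ts.
  by rewrite derive1E (@derive_val _ _ _ _ _ _ _ (dF s (ltW Ts))); have := f'c s Ts; lra.
- apply: derivable_within_continuous => s; rewrite in_itv /= andbT => Ts.
  by have [] := dF s Ts.
Qed.

Lemma ge0_linear_decay_le0 (f : R -> R) (c T : R) :
  (forall t : R, T <= t -> 0 <= f t) ->
  (forall t : R, T <= t -> f t + c * t <= f T + c * T) -> c <= 0.
Proof.
move=> f0 decay; rewrite leNgt; apply/negP => c0.
have fT := f0 T (lexx T).
pose y := T + f T / c + 1.
have Ty : T <= y.
  by rewrite /y -addrA lerDl; apply: addr_ge0 => //; apply: divr_ge0 => //; exact: ltW.
have := decay y Ty; have := f0 y Ty.
have -> : c * y = c * T + f T + c by rewrite /y; field; rewrite gt_eqF.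
lra.
Qed.

End real_facts.

Section pmac.
Variables (R : realType) (K A : nat).
Variables (P : 'I_K -> R) (b sigma2 : 'I_A -> R) (g : 'I_K -> 'I_A -> R).
Hypothesis P_gt0 : forall k, 0 < P k.
Hypothesis b_gt0 : forall a, 0 < b a.
Hypothesis sigma2_gt0 : forall a, 0 < sigma2 a.
Hypothesis g_gt0 : forall k a, 0 < g k a.

Local Notation profile := (profile R K A).
Local Notation in_Delta := (in_Delta P).
Local Notation vka := (vka b sigma2 g).
Local Notation vk := (vk P b sigma2 g).
Local Notation replicator_solution := (replicator_solution P b sigma2 g).

Definition nonneg (p : profile) := forall k a, 0 <= p k a.

Definition load (p : profile) a := sigma2 a + \sum_(l < K) g l a * p l a.

Definition interference (p : profile) k a :=
  sigma2 a + \sum_(l < K | l != k) g l a * p l a.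

Definition potential (p : profile) := \sum_(a < A) b a * ln (load p a).

Definition potential_max (q : profile) :=
  in_Delta q /\ forall p, in_Delta p -> potential p <= potential q.

Lemma Delta_nonneg p : in_Delta p -> nonneg p.
Proof. by move=> Dp k a; case: (Dp k). Qed.

Lemma Delta_le (p : profile) k a : in_Delta p -> p k a <= P k.
Proof. by case/(_ k) => p0 <-; exact: ler_sum_term. Qed.

Lemma load_gt0 p a : nonneg p -> 0 < load p a.
Proof.
move=> p0; apply: ltr_wpDr => //.
by apply: sumr_ge0 => l _; apply: mulr_ge0 => //; exact: ltW.
Qed.

Lemma interference_gt0 p k a : nonneg p -> 0 < interference p k a.
Proof.
move=> p0; apply: ltr_wpDr => //.
by apply: sumr_ge0 => l _; apply: mulr_ge0 => //; exact: ltW.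
Qed.

Lemma loadE p k a : load p a = interference p k a + g k a * p k a.
Proof. by rewrite /load /interference (bigD1 k) //=; lra. Qed.

(* [potential] is an exact potential: the subtracted term does not depend on [p k]. *)
Lemma payoffE p k : nonneg p ->
  payoff b sigma2 g k p = potential p - \sum_(a < A) b a * ln (interference p k a).
Proof.
move=> p0; rewrite /payoff /potential -sumrB; apply: eq_bigr => a _.
have [Y0 S0] := (interference_gt0 k a p0, load_gt0 a p0).
rewrite -mulrBr -ln_div ?posrE //; congr (_ * ln _).
rewrite (loadE p k) -/(interference p k a); field; exact: lt0r_neq0.
Qed.

Lemma interference_deviate q k x a : interference (deviate q k x) k a = interference q k a.
Proof.
rewrite /interference; congr (_ + _); apply: eq_bigr => l lk.
by rewrite /deviate (negbTE lk).
Qed.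

Lemma potential_max_NE q : potential_max q -> is_NE P b sigma2 g q.
Proof.
move=> [Dq qmax]; split => // k x Dx.
have Dd : in_Delta (deviate q k x).
  by move=> l; rewrite /deviate; case: eqP => [->|].
have [nq nd] := (Delta_nonneg Dq, Delta_nonneg Dd).
rewrite !payoffE //; under eq_bigr do rewrite interference_deviate.
by rewrite lerD2r; apply: qmax.
Qed.

Lemma potential_concave p q : nonneg p -> nonneg q ->
  potential q <= potential p + \sum_(k < K) \sum_(a < A) vka p k a * (q k a - p k a).
Proof.
move=> p0 q0; rewrite /potential exchange_big -big_split /=; apply: ler_sum => a _.
have [Sp Sq] := (load_gt0 a p0, load_gt0 a q0).
have dload : load q a - load p a = \sum_(k < K) g k a * (q k a - p k a).
  by rewrite /load; under [RHS]eq_bigr do rewrite mulrBr; rewrite sumrB; lra.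
have -> : \sum_(k < K) vka p k a * (q k a - p k a) =
    b a * (load q a / load p a - 1).
  have -> : b a * (load q a / load p a - 1) = b a / load p a * (load q a - load p a).
    by field; lra.
  rewrite dload mulr_sumr; apply: eq_bigr => k _.
  by rewrite /vka -/(load p a); field; lra.
have := ln_le_subr1 (divr_gt0 Sq Sp); rewrite ln_div ?posrE // => h.
have := ler_wpM2l (ltW (b_gt0 a)) h; lra.
Qed.

Definition advantage (q p : profile) :=
  \sum_(k < K) \sum_(a < A) q k a * (vka p k a - vk p k).

Lemma advantageE q p : in_Delta p -> in_Delta q ->
  advantage q p = \sum_(k < K) \sum_(a < A) vka p k a * (q k a - p k a).
Proof.
move=> Dp Dq; apply: eq_bigr => k _.
under eq_bigr do rewrite mulrBr; under [RHS]eq_bigr do rewrite mulrBr.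
rewrite !sumrB -mulr_suml; case: (Dq k) => _ ->; congr (_ - _).
  by apply: eq_bigr => a _; rewrite mulrC.
rewrite /vk mulrA mulrV ?mul1r ?unitfE ?gt_eqF //.
by apply: eq_bigr => a _; rewrite mulrC.
Qed.

Lemma potential_gap_le_advantage q p : in_Delta p -> in_Delta q ->
  potential q - potential p <= advantage q p.
Proof.
move=> Dp Dq; rewrite advantageE // lerBlDl.
exact: potential_concave (Delta_nonneg Dp) (Delta_nonneg Dq).
Qed.

Lemma vka_ge0 p k a : nonneg p -> 0 <= vka p k a.
Proof.
move=> p0; apply: divr_ge0; last exact/ltW/load_gt0.
by apply: mulr_ge0; exact: ltW.
Qed.

Lemma vka_le p k a : nonneg p -> vka p k a <= b a * g k a / sigma2 a.
Proof.
move=> p0; rewrite /vka -/(load p a) ler_pM2l ?mulr_gt0 //.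
rewrite lef_pV2 ?posrE ?load_gt0 // lerDl.
by apply: sumr_ge0 => l _; apply: mulr_ge0 => //; exact: ltW.
Qed.

Lemma vk_le p k : in_Delta p -> vk p k <= \sum_(a < A) b a * g k a / sigma2 a.
Proof.
move=> Dp; have p0 := Delta_nonneg Dp.
have B0 a : 0 <= b a * g k a / sigma2 a.
  by apply: divr_ge0; [apply: mulr_ge0 | ]; exact: ltW.
rewrite /vk ler_pdivrMl // -[P k](proj2 (Dp k)) mulr_suml.
apply: ler_sum => a _; apply: ler_wpM2l; first exact: p0.
exact: le_trans (vka_le k a p0) (ler_sum_term _ B0).
Qed.

Lemma replicator_gt0 p k a : replicator_solution p -> 0 < p 0 k a ->
  forall t, 0 <= t -> 0 < p t k a.
Proof.
move=> [D [C Der]].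
apply: (proportional_derive_gt0 (h := fun t => vka (p t) k a - vk (p t) k)
          (B := \sum_(a < A) b a * g k a / sigma2 a) (C k a)) => [t t0|t t0|t t0].
- exact: Delta_nonneg (D t (ltW t0)) k a.
- have Dt := D t (ltW t0).
  have := vk_le k Dt; have := vka_ge0 k a (Delta_nonneg Dt); lra.
- exact: Der.
Qed.

(* A real-valued version of [KL], equal to it whenever [supp_sub q p] holds. *)
Definition kl_div (q p : profile) := \sum_(k < K) \sum_(a < A) kl_term (q k a) (p k a).

Definition supp_sub (q p : profile) := forall k a, q k a != 0 -> 0 < p k a.

Lemma KL_lt_supp_sub q p : nonneg p -> (KL q p < +oo)%E -> supp_sub q p.
Proof.
move=> p0 KLq k a qn; rewrite lt_def p0 andbT; apply/eqP => pka0.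
move: KLq; rewrite /KL.
set F := fun k' a' => if q k' a' == 0 then 0%E else if p k' a' == 0 then +oo%E
  else (q k' a' * ln (q k' a' / p k' a'))%:E.
have FNy k' a' : F k' a' != -oo%E by rewrite /F; case: ifP => //; case: ifP.
suff -> : (\sum_(k' < K) \sum_(a' < A) F k' a')%E = +oo%E by rewrite ltxx.
apply/esum_eqyP.
  by move=> k' _; apply/negP => /eqP /esum_eqNyP [a' [_ _ /eqP]]; apply/negP.
exists k; split => //; apply/esum_eqyP => [a' _|]; first exact: FNy.
by exists a; split => //; rewrite /F (negbTE qn) pka0 eqxx.
Qed.

Lemma supp_sub_replicator q p t : replicator_solution p -> supp_sub q (p 0) ->
  0 <= t -> supp_sub q (p t).
Proof. by move=> sol qp t0 k a qn; apply: replicator_gt0 => //; exact: qp. Qed.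

Lemma kl_div_ge_hellinger q p : in_Delta p -> in_Delta q -> supp_sub q p ->
  \sum_(k < K) \sum_(a < A) (Num.sqrt (p k a) - Num.sqrt (q k a)) ^+ 2 <= kl_div q p.
Proof.
move=> Dp Dq qp.
have -> : kl_div q p =
    \sum_(k < K) \sum_(a < A) (kl_term (q k a) (p k a) - q k a + p k a).
  apply: eq_bigr => k _; rewrite big_split sumrB /=.
  by case: (Dp k) => _ ->; case: (Dq k) => _ ->; rewrite subrK.
apply: ler_sum => k _; apply: ler_sum => a _.
by apply: kl_term_ge_hellinger;
  [exact: Delta_nonneg Dq k a | exact: Delta_nonneg Dp k a | exact: qp].
Qed.

Lemma kl_div_ge_sqr q p k a : in_Delta p -> in_Delta q -> supp_sub q p ->
  (Num.sqrt (p k a) - Num.sqrt (q k a)) ^+ 2 <= kl_div q p.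
Proof.
move=> Dp Dq qp; apply: le_trans (kl_div_ge_hellinger Dp Dq qp).
apply: le_trans (ler_sum_term k _) => [|k']; last by apply: sumr_ge0 => *; exact: sqr_ge0.
by apply: ler_sum_term => a'; exact: sqr_ge0.
Qed.

Lemma kl_div_ge0 q p : in_Delta p -> in_Delta q -> supp_sub q p -> 0 <= kl_div q p.
Proof.
move=> Dp Dq qp; apply: le_trans (kl_div_ge_hellinger Dp Dq qp).
by apply: sumr_ge0 => k _; apply: sumr_ge0 => a _; exact: sqr_ge0.
Qed.

Lemma kl_term_derive x p k a t : replicator_solution p -> 0 < t ->
  (x != 0 -> 0 < p t k a) ->
  is_derive t 1 (fun s => kl_term x (p s k a)) (- (x * (vka (p t) k a - vk (p t) k))).
Proof.
move=> [_ [_ Der]] t0 xp; rewrite /kl_term; case: eqP => [->|/eqP xn0].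
  by rewrite mul0r oppr0; exact: is_derive_cst.
have dln := is_derive1_comp (f := @ln R) (is_derive1_ln (xp xn0)) (Der t t0 k a).
apply: is_derive_eq; rewrite /GRing.scale /=; field.
by rewrite gt_eqF ?xp.
Qed.

Lemma kl_div_derive q p t : replicator_solution p -> 0 < t -> supp_sub q (p t) ->
  is_derive t 1 (fun s => kl_div q (p s)) (- advantage q (p t)).
Proof.
move=> sol t0 qp; rewrite /advantage -sumrN.
have dk k : is_derive t 1 (fun s => \sum_(a < A) kl_term (q k a) (p s k a))
    (- \sum_(a < A) q k a * (vka (p t) k a - vk (p t) k)).
  have := is_derive_sum (h := fun a s => kl_term (q k a) (p s k a))
    (fun a => kl_term_derive sol t0 (qp k a)).
  by rewrite fct_sumE sumrN.
by have := is_derive_sum dk; rewrite fct_sumE.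
Qed.

Lemma kl_div_decay q p c T : replicator_solution p -> in_Delta q ->
  supp_sub q (p 0) -> 0 < T ->
  (forall t, T <= t -> potential (p t) <= potential q - c) ->
  forall x y, T <= x -> x <= y -> kl_div q (p y) + c * y <= kl_div q (p x) + c * x.
Proof.
move=> sol Dq qp T0 pot_le.
apply: (derive_le_rate (f' := fun t => - advantage q (p t))) => t Tt.
  have t0 := lt_le_trans T0 Tt.
  by apply: kl_div_derive => //; exact: supp_sub_replicator (ltW t0).
have t0 := ltW (lt_trans T0 Tt).
have := potential_gap_le_advantage (sol.1 t t0) Dq; have := pot_le t (ltW Tt); lra.
Qed.

Lemma potential_approaches q p e T : replicator_solution p -> in_Delta q ->
  supp_sub q (p 0) -> 0 < e -> exists2 t, T <= t & potential q - e < potential (p t).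
Proof.
move=> sol Dq qp e0; apply: contrapT => far.
pose T' := Num.max T 1.
have T'0 : 0 < T' by rewrite lt_max ltr01 orbT.
have T'_ge t : T' <= t -> 0 <= t by move=> /(lt_le_trans T'0) /ltW.
have pot_le t : T' <= t -> potential (p t) <= potential q - e.
  move=> T't; rewrite leNgt; apply/negP => close; apply: far; exists t => //.
  by apply: le_trans T't; rewrite le_max lexx.
have : e <= 0.
  apply: (ge0_linear_decay_le0 (f := fun t => kl_div q (p t)) (T := T')) => t T't /=.
    by apply: kl_div_ge0 (sol.1 t _) Dq (supp_sub_replicator _ _ _) => //; exact: T'_ge.
  exact: (kl_div_decay sol Dq qp T'0 pot_le (lexx T') T't).
by rewrite leNgt e0.
Qed.

Lemma kl_div_small_cvg q p : replicator_solution p -> potential_max q ->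
  supp_sub q (p 0) ->
  (forall e T, 0 < e -> exists2 t, T <= t & kl_div q (p t) < e) -> converges_to p q.
Proof.
move=> sol [Dq qmax] qp kl_small k a; apply/cvgrPdist_lt => e e0.
have Pk := P_gt0 k.
have d0 : 0 < e ^+ 2 / (4 * P k) by apply: divr_gt0; [exact: exprn_gt0 | lra].
have [t0 t0_ge1 kl_t0] := kl_small _ 1 d0.
have t0_gt0 : 0 < t0 by apply: lt_le_trans t0_ge1.
exists t0; split=> [|t /= /ltW t0t]; first exact: num_real.
have t_ge0 : 0 <= t by apply: le_trans t0t; exact: ltW.
have kl_mono : kl_div q (p t) <= kl_div q (p t0).
  have := kl_div_decay (c := 0) sol Dq qp t0_gt0 _ (lexx t0) t0t.
  rewrite !mul0r !addr0; apply=> s t0s; rewrite subr0; apply: qmax.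
  by apply: sol.1; apply: le_trans t0s; exact: ltW.
have Dt := sol.1 t t_ge0.
have hell := kl_div_ge_sqr k a Dt Dq (supp_sub_replicator sol qp t_ge0).
have sqr_le : (p t k a - q k a) ^+ 2 <=
    4 * P k * (Num.sqrt (p t k a) - Num.sqrt (q k a)) ^+ 2.
  by apply: sqr_subr_le_sqrt; rewrite ?Delta_nonneg ?Delta_le.
have : (q k a - p t k a) ^+ 2 < e ^+ 2.
  rewrite -sqrrN opprB; apply: le_lt_trans sqr_le _.
  rewrite -ltr_pdivlMl ?mulr_gt0 //; apply: le_lt_trans hell _.
  by rewrite mulrC; apply: le_lt_trans kl_mono kl_t0.
rewrite !expr2 ltr_norml => sqr_lt; apply/andP; split; nra.
Qed.

Lemma kl_div_self q : kl_div q q = 0.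
Proof.
rewrite /kl_div big1 // => k _; rewrite big1 // => a _.
by rewrite /kl_term subrr mulr0; case: ifP.
Qed.

Local Open Scope classical_set_scope.

(* Profiles as row vectors of length K * A, where bounded closed sets are compact. *)
Definition profile_of_rV (v : 'rV[R]_(K * A)) : profile :=
  fun k a => v 0 (mxvec_index k a).

Definition rV_of_profile (p : profile) : 'rV[R]_(K * A) :=
  mxvec (\matrix_(k, a) p k a).

Lemma rV_of_profileK : cancel rV_of_profile profile_of_rV.
Proof.
by move=> p; apply: funext => k; apply: funext => a; rewrite /profile_of_rV mxvecE mxE.
Qed.

Lemma profile_of_rV_continuous k a : continuous (fun v => profile_of_rV v k a).
Proof. by move=> v; exact: coord_continuous. Qed.

Definition Delta_rV := [set v : 'rV[R]_(K * A) | in_Delta (profile_of_rV v)].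

Lemma closed_Delta_rV : closed Delta_rV.
Proof.
have -> : Delta_rV = \bigcap_(i in [set: 'I_K * 'I_A])
     [set v | 0 <= profile_of_rV v i.1 i.2] `&`
   \bigcap_(k in [set: 'I_K]) [set v | \sum_(a < A) profile_of_rV v k a = P k].
  apply/seteqP; split => v.
    by move=> Dv; split => [[k a] _|k _]; [exact: Delta_nonneg Dv k a | case: (Dv k)].
  by move=> [v0 vP] k; split => [a|]; [exact: (v0 (k, a)) | exact: vP].
apply: closedI; apply: closed_bigI.
  move=> [k a] _.
  apply: (@preimage_closed _ _ (fun v => profile_of_rV v k a) [set x | 0 <= x]).
    by move=> v _; exact: profile_of_rV_continuous.
  exact: closed_ge.
move=> k _.
apply: (@preimage_closed _ _ (fun v => \sum_(a < A) profile_of_rV v k a) [set x | x = P k]).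
  by move=> v _; apply: continuous_sum => a; exact: profile_of_rV_continuous.
exact: closed_eq.
Qed.

Lemma bounded_Delta_rV : bounded_set Delta_rV.
Proof.
exists (\sum_(k < K) P k); split; first exact: num_real.
move=> M /= PM v Dv; rewrite /Num.norm /= mx_normrE.
have M0 : 0 <= M.
  by apply/ltW; apply: le_lt_trans PM; apply: sumr_ge0 => k _; exact/ltW.
apply/bigmax_leP; split => // [[i j]] _ /=.
rewrite ord1; case/mxvec_indexP: j => k a.
rewrite ger0_norm; last exact: Delta_nonneg Dv k a.
apply/ltW; apply: le_lt_trans PM; apply: le_trans (Delta_le k a Dv) _.
by apply: ler_sum_term => l; exact/ltW.
Qed.

Lemma compact_Delta_rV : compact Delta_rV.
Proof. exact: bounded_closed_compact bounded_Delta_rV closed_Delta_rV. Qed.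

Lemma potential_rV_continuous v : Delta_rV v ->
  {for v, continuous (fun w => potential (profile_of_rV w))}.
Proof.
move=> Dv; apply: continuous_sum => a.
have sum_cont := continuous_sum (fun l =>
  continuousM (@cst_continuous _ _ (g l a) v) (@profile_of_rV_continuous l a v)).
have load_cont := continuousD (@cst_continuous _ _ (sigma2 a) v) sum_cont.
have ln_cont := continuous_comp load_cont (continuous_ln (load_gt0 a (Delta_nonneg Dv))).
exact: continuousM (@cst_continuous _ _ (b a) v) ln_cont.
Qed.

Lemma kl_div_rV_continuous v : Delta_rV v ->
  {for v, continuous (fun w => kl_div (profile_of_rV v) (profile_of_rV w))}.
Proof.
move=> Dv; apply: continuous_sum => k; apply: continuous_sum => a.
rewrite /kl_term; case: eqVneq => [_|vn0]; first exact: cst_continuous.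
have v_gt0 : 0 < profile_of_rV v k a by rewrite lt0r vn0 (Delta_nonneg Dv).
have ln_cont := continuous_comp (@profile_of_rV_continuous k a v) (continuous_ln v_gt0).
exact: continuousM (@cst_continuous _ _ (profile_of_rV v k a) v)
  (continuousB (@cst_continuous _ _ (ln (profile_of_rV v k a)) v) ln_cont).
Qed.

Lemma potential_max_exists (p : profile) : in_Delta p -> exists q, potential_max q.
Proof.
move=> Dp.
have D0 : Delta_rV !=set0 by exists (rV_of_profile p); rewrite /Delta_rV /= rV_of_profileK.
have pot_cont : {within Delta_rV, continuous (fun w => potential (profile_of_rV w))}.
  apply: continuous_in_subspaceT => v; rewrite inE; exact: potential_rV_continuous.
have [v] := EVT_max_rV D0 compact_Delta_rV pot_cont; rewrite inE => Dv vmax.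
exists (profile_of_rV v); split => // x Dx.
by rewrite -(rV_of_profileK x); apply: vmax; rewrite inE /Delta_rV /= rV_of_profileK.
Qed.

Definition cluster_at_pinfty (p : R -> profile) (v : 'rV[R]_(K * A)) :=
  forall B, nbhs v B -> forall T, exists2 t, T <= t & B (rV_of_profile (p t)).

Lemma potential_max_cluster q p : replicator_solution p -> potential_max q ->
  supp_sub q (p 0) ->
  exists2 v, potential_max (profile_of_rV v) & cluster_at_pinfty p v.
Proof.
move=> sol [Dq qmax] qp.
(* late times at which the potential is nearly maximal *)
pose D := [set x : R * R | 0 < x.2].
pose late x := [set t : R | x.1 <= t /\ 0 <= t /\ potential q - x.2 < potential (p t)].
have late_filter : ProperFilter (filter_from D late).
  apply: filter_from_proper.
    apply: filter_from_filter; first by exists (0, 1); rewrite /D /= ltr01.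
    move=> i j Di Dj; exists (Num.max i.1 j.1, Num.min i.2 j.2).
      by rewrite /D /= lt_min Di Dj.
    move=> t [/= + [t0 close]]; rewrite ge_max => /andP[it jt].
    have mi : Num.min i.2 j.2 <= i.2 by rewrite ge_min lexx.
    have mj : Num.min i.2 j.2 <= j.2 by rewrite ge_min lexx orbT.
    by split; split => //; split => //; lra.
  move=> [T e] /= e0.
  have [t Tt close] := potential_approaches (Num.max T 0) sol Dq qp e0.
  by exists t; move: Tt; rewrite ge_max => /andP[].
pose F := (fun t => rV_of_profile (p t)) @ filter_from D late.
have FD : F Delta_rV.
  exists (0, 1); first by rewrite /D /= ltr01.
  by move=> t [_ [t0 _]]; rewrite /Delta_rV /= rV_of_profileK; exact: sol.1.
have [v [Dv clv]] := compact_Delta_rV (fmap_proper_filter _ late_filter) FD.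
have visits x B : D x -> nbhs v B -> exists2 t, late x t & B (rV_of_profile (p t)).
  move=> Dx vB; have Flate : F ((fun t => rV_of_profile (p t)) @` late x).
    by exists x => // t xt; exists t.
  by have [_ [[t xt <-] Bt]] := clv _ _ Flate vB; exists t.
exists v; last by move=> B vB T; have [t [Tt _] Bt] := visits (T, 1) B ltr01 vB; exists t.
split=> // x Dx; apply: le_trans (qmax x Dx) _; rewrite leNgt; apply/negP => below.
set d := potential q - potential (profile_of_rV v).
have d0 : 0 < d by rewrite subr_gt0.
have vB : nbhs v [set w | potential (profile_of_rV w) < potential q - d / 2].
  by apply: (cvgr_lt _ (potential_rV_continuous Dv)); rewrite /d; lra.
have d2 : D (0, d / 2) by rewrite /D /= divr_gt0.
have [t [_ [_ close]]] := visits _ _ d2 vB.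
by rewrite /= rV_of_profileK => far; move: close => /=; lra.
Qed.

Lemma cluster_potential_max_cvg v p : replicator_solution p ->
  potential_max (profile_of_rV v) -> supp_sub (profile_of_rV v) (p 0) ->
  cluster_at_pinfty p v -> converges_to p (profile_of_rV v).
Proof.
move=> sol vmax vp clv; apply: kl_div_small_cvg => // e T e0.
have vB : nbhs v [set w | kl_div (profile_of_rV v) (profile_of_rV w) < e].
  by apply: (cvgr_lt _ (kl_div_rV_continuous vmax.1)); rewrite kl_div_self.
by have [t Tt close] := clv _ vB T; exists t => //; rewrite /= rV_of_profileK in close.
Qed.

Lemma replicator_cvg_potential_max q p : replicator_solution p -> potential_max q ->
  supp_sub q (p 0) -> exists2 v, potential_max v & (supp_sub v (p 0) -> converges_to p v).
Proof.
move=> sol qmax qp; have [v vmax clv] := potential_max_cluster sol qmax qp.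
by exists (profile_of_rV v) => // vp; exact: cluster_potential_max_cvg.
Qed.

End pmac.

Theorem theorem2 (R : realType) (K A : nat) (P : 'I_K -> R) (b sigma2 : 'I_A -> R)
    (g : 'I_K -> 'I_A -> R)
    (HP : forall k, 0 < P k) (Hb : forall a, 0 < b a) (Hs : forall a, 0 < sigma2 a)
    (Hg : forall k a, 0 < g k a) :
  (forall q : profile R K A, is_NE P b sigma2 g q ->
     (forall q' : profile R K A, is_NE P b sigma2 g q' -> q' = q) ->
     forall p : R -> profile R K A, replicator_solution P b sigma2 g p ->
       (KL q (p 0%R) < +oo)%E -> converges_to p q)
  /\
  (forall p : R -> profile R K A, replicator_solution P b sigma2 g p ->
     in_interior P (p 0) ->
     exists q : profile R K A, is_NE P b sigma2 g q /\ converges_to p q).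
Proof.
have NE_of_max q : potential_max P b sigma2 g q -> is_NE P b sigma2 g q.
  exact: potential_max_NE.
have cvg_max := replicator_cvg_potential_max HP Hb Hs Hg.
split=> [q _ q_unique p sol KLq | p sol [D0 p0_gt0]].
- have D0 := sol.1 0 (lexx 0).
  have [m mmax] := potential_max_exists b HP Hs Hg D0.
  have /q_unique mq := NE_of_max m mmax; rewrite {}mq in mmax.
  have qp := KL_lt_supp_sub (Delta_nonneg D0) KLq.
  by have [v /NE_of_max/q_unique ->] := cvg_max _ _ sol mmax qp; apply.
- have [m mmax] := potential_max_exists b HP Hs Hg D0.
  have [v vmax vcvg] := cvg_max _ _ sol mmax (fun k a _ => p0_gt0 k a).
  by exists v; split; [exact: NE_of_max | apply: vcvg => k a _; exact: p0_gt0].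
Qed.
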